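(* Consider Algorithm MWHVC (described in the context) run on a hypergraph $G=(V,E)$ of rank $f$ with nonnegative vertex weights $w$, with parameters $\varepsilon\in(0,1]$, $\beta=\varepsilon/(f+\varepsilon)$ and multiplier $\alpha>1$. Upon termination, the set $C$ is a vertex cover of $G$ (every hyperedge intersects $C$) and $w(C)\le (f+\varepsilon)\cdot\mathrm{opt}$, where $\mathrm{opt}$ is the cost of an optimal fractional weighted vertex cover of $G$; i.e. the approximation ratio of the algorithm is $f+\varepsilon$.
   Context: Let $G=(V,E)$ be a hypergraph: each hyperedge is a nonempty subset of $V$ of size at most $f$ (rank $f$). Vertices have nonnegative weights $w(v)$, and $w(U)=\sum_{v\in U}w(v)$. For $v\in V$, $E(v)=\{e\in E: v\in e\}$; $\Delta=\max_v |E(v)|\ge 3$. A hyperedge $e$ is covered by $C\subseteq V$ if $e\cap C\neq\emptyset$. The optimal fractional vertex cover value $\mathrm{opt}$ is the minimum of $\sum_v w(v)x(v)$ subject to $\sum_{v\in e}x(v)\ge 1$ for all $e\in E$ and $x\ge 0$. The computation is distributed in synchronous rounds on the bipartite network with node set $V\cup E$ and a link between $v$ and $e$ iff $v\in e$. Parameters: $\varepsilon\in(0,1]$, $\beta=\varepsilon/(f+\varepsilon)$, and a multiplier $\alpha>1$. Algorithm MWHVC: Initialize $C\gets\emptyset$ and $E'(v)\gets E(v)$ for every $v$. Iteration $0$: every hyperedge $e$ sets $\mathrm{deal}_0(e)=\beta\cdot\min_{v\in e} w(v)/|E(v)|$ and $\delta_0(e)=\mathrm{deal}_0(e)$. For $i=1,2,\dots$: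 (a) every vertex $v\notin C$ (not terminated) checks whether $\sum_{e\in E(v)}\delta_{i-1}(e)\ge(1-\beta)w(v)$; if so, $v$ joins $C$, tells every $e\in E'(v)$ that $e$ is covered, and terminates. (b) Every uncovered hyperedge that receives such a message becomes covered, informs all its vertices, and terminates. (c) Every vertex $v\notin C$ that is told $e$ is covered sets $E'(v)\gets E'(v)\setminus\{e\}$; if $E'(v)=\emptyset$, $v$ terminates without joining $C$. (d) Every vertex $v\notin C$ sends ''raise'' to all $e\in E'(v)$ if $\sum_{e\in E'(v)}\mathrm{deal}_{i-1}(e)\le(\beta/\alpha)w(v)$, and otherwise sends ''stuck'' to all $e\in E'(v)$. (e) Every uncovered hyperedge $e$ sets $\mathrm{deal}_i(e)=\mathrm{deal}_{i-1}(e)$ if it received some ''stuck'' message, and $\mathrm{deal}_i(e)=\alpha\cdot\mathrm{deal}_{i-1}(e)$ otherwise, and $\delta_i(e)=\delta_{i-1}(e)+\mathrm{deal}_i(e)$. A vertex terminates when it is in $C$ or all its hyperedges are covered; a hyperedge terminates when covered. *)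

From HB Require Import structures.
From mathcomp Require Import all_boot all_order all_algebra.
Set Implicit Arguments. Unset Strict Implicit. Unset Printing Implicit Defensive.
Import Order.TTheory GRing.Theory Num.Theory.
Local Open Scope ring_scope.

Section MWHVC.
Variables (R : realFieldType) (V : finType) (E : {set {set V}}).

Definition edges_of (v : V) : {set {set V}} := [set e in E | v \in e].

(* minimum of g over a (nonempty) set e; 0 on the empty set (never used). *)
Definition setmin (g : V -> R) (e : {set V}) : R :=
  if enum e is x :: s then \big[Order.min/g x]_(y <- s) g y else 0.

Definition frac_cover (x : V -> R) : Prop :=
  (forall v, 0 <= x v) /\ (forall e, e \in E -> 1 <= \sum_(v in e) x v).

Definition is_vertex_cover (C : {set V}) : Prop :=
  forall e, e \in E -> e :&: C != set0.

Variables (w : V -> R) (eps alpha : R) (f : nat).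

Definition mwhvc_beta : R := eps / (f%:R + eps).

Record state := State {
  st_C : {set V};
  st_cov : {set {set V}};
  st_deal : {set V} -> R;
  st_delta : {set V} -> R }.

Definition vterminated (s : state) (v : V) : bool :=
  (v \in st_C s) || (edges_of v \subset st_cov s).

Definition deal0 (e : {set V}) : R :=
  mwhvc_beta * setmin (fun v => w v / (#|edges_of v|)%:R) e.

Definition init_state : state := State set0 set0 deal0 deal0.

(* Iteration i >= 1, steps (a)-(e). For an uncovered hyperedge e and a
   non-terminated vertex v not in C, E'(v) = E(v) minus the covered edges. *)
Definition step (s : state) : state :=
  let J := [set v | ~~ vterminated s v &
                   (1 - mwhvc_beta) * w v <= \sum_(e in edges_of v) st_delta s e] in
  let C' := st_C s :|: J in
  let cov' := st_cov s :|: [set e in E | [exists v in e, v \in J]] in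
  let stuck v := mwhvc_beta / alpha * w v < \sum_(e in edges_of v :\: cov') st_deal s e in
  let deal' e := if e \in cov' then st_deal s e
                 else if [exists v in e, stuck v] then st_deal s e
                 else alpha * st_deal s e in
  let delta' e := if e \in cov' then st_delta s e else st_delta s e + deal' e in
  State C' cov' deal' delta'.

(* state after i iterations (iterations 1..i following iteration 0) *)
Definition run (i : nat) : state := iter i step init_state.

Definition terminated (s : state) : bool :=
  [forall v, vterminated s v] && [forall e in E, e \in st_cov s].

End MWHVC.

From HB Require Import structures.
From mathcomp Require Import all_boot all_order all_algebra.
From mathcomp Require Import lra.
Set Implicit Arguments. Unset Strict Implicit. Unset Printing Implicit Defensive.
Import Order.TTheory GRing.Theory Num.Theory.
Local Open Scope ring_scope.

(* The values delta(e) form a fractional packing: at every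
   vertex their sum stays below the weight, because a vertex whose packing becomes
   (1 - beta)-tight joins C and freezes all its hyperedges, while the deals of the
   uncovered hyperedges at a vertex always sum to at most beta w(v) (they are only
   multiplied by alpha when this sum is at most beta w(v) / alpha). Every vertex of C
   is (1 - beta)-tight, so (1 - beta) w(C) <= f * sum_e delta(e) <= f * opt by weak
   LP duality, and (1 - beta) (f + eps) = f. *)

Lemma setmin_le (R : realFieldType) (V : finType) (g : V -> R) (e : {set V}) v :
  v \in e -> setmin g e <= g v.
Proof.
rewrite /setmin -mem_enum; case: (enum e) => [//|x s].
by rewrite inE => /predU1P[->|vs]; [exact: bigmin_le_id | exact: ge_bigmin_seq].
Qed.

Lemma setmin_ge0 (R : realFieldType) (V : finType) (g : V -> R) (e : {set V}) :
  (forall v, 0 <= g v) -> 0 <= setmin g e.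
Proof. by move=> g0; rewrite /setmin; case: (enum e) => // x s; apply: le_bigmin. Qed.

Lemma ler_sum_subset (R : numDomainType) (T : finType) (A B : {set T}) (F : T -> R) :
  A \subset B -> (forall x, x \in B -> 0 <= F x) ->
  \sum_(x in A) F x <= \sum_(x in B) F x.
Proof.
move=> /setIidPr AB F0; rewrite [X in _ <= X](big_setID A) AB lerDl.
by apply: sumr_ge0 => x /setDP[/F0].
Qed.

Section Duality.
Variables (R : realFieldType) (V : finType) (E : {set {set V}}).

Lemma exchange_big_edges_of (F : V -> {set V} -> R) :
  \sum_v \sum_(e in edges_of E v) F v e = \sum_(e in E) \sum_(v in e) F v e.
Proof.
rewrite (exchange_big_dep (mem E)) /=; last by move=> v e _; rewrite inE => /andP[].
by apply: eq_bigr => e eE; apply: eq_bigl => v; rewrite inE eE.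
Qed.

Lemma sum_edges_of_le_rank (f : nat) (d : {set V} -> R) :
  (forall e, e \in E -> #|e| <= f)%N -> (forall e, e \in E -> 0 <= d e) ->
  \sum_v \sum_(e in edges_of E v) d e <= f%:R * \sum_(e in E) d e.
Proof.
move=> hrank d0; rewrite exchange_big_edges_of mulr_sumr; apply: ler_sum => e eE.
by rewrite sumr_const -[_ *+ _]mulr_natl ler_wpM2r ?d0 // ler_nat hrank.
Qed.

Lemma weak_duality (w x : V -> R) (d : {set V} -> R) :
  (forall e, e \in E -> 0 <= d e) ->
  (forall v, \sum_(e in edges_of E v) d e <= w v) ->
  frac_cover E x -> \sum_(e in E) d e <= \sum_v w v * x v.
Proof.
move=> d0 packing [x0 cover].
apply: le_trans (_ : \sum_(e in E) \sum_(v in e) d e * x v <= _).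
  apply: ler_sum => e eE; rewrite -mulr_sumr -[X in X <= _]mulr1.
  by rewrite ler_wpM2l ?d0 ?cover.
by rewrite -exchange_big_edges_of; apply: ler_sum => v _; rewrite -mulr_suml ler_wpM2r.
Qed.

Lemma tight_set_cost (f : nat) (w x : V -> R) (d : {set V} -> R) (b : R) (C : {set V}) :
  (forall e, e \in E -> #|e| <= f)%N -> (forall e, e \in E -> 0 <= d e) ->
  (forall v, \sum_(e in edges_of E v) d e <= w v) ->
  (forall v, v \in C -> (1 - b) * w v <= \sum_(e in edges_of E v) d e) ->
  frac_cover E x -> (1 - b) * \sum_(v in C) w v <= f%:R * \sum_v w v * x v.
Proof.
move=> hrank d0 packing tight xcover.
rewrite [X in X <= _]mulr_sumr.
apply: le_trans (_ : \sum_(v in C) \sum_(e in edges_of E v) d e <= _).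
  exact: ler_sum.
apply: le_trans (_ : \sum_v \sum_(e in edges_of E v) d e <= _).
  rewrite [X in _ <= X](bigID (mem C)) /= lerDl.
  by apply: sumr_ge0 => v _; apply: sumr_ge0 => e; rewrite inE => /andP[/d0].
apply: le_trans (sum_edges_of_le_rank hrank d0) _.
by rewrite ler_wpM2l // (weak_duality d0 packing).
Qed.

End Duality.

Section Invariant.
Variables (R : realFieldType) (V : finType) (E : {set {set V}}).
Variables (w : V -> R) (eps alpha : R) (f : nat).
Local Notation beta := (mwhvc_beta eps f).
Local Notation step := (step E w eps alpha f).

Record mwhvc_invariant (s : state R V) : Prop := MwhvcInvariant {
  inv_deal_ge0 : forall e, 0 <= st_deal s e;
  inv_delta_ge0 : forall e, 0 <= st_delta s e;
  inv_deal_packing : forall v,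
    \sum_(e in edges_of E v :\: st_cov s) st_deal s e <= beta * w v;
  inv_delta_packing : forall v, \sum_(e in edges_of E v) st_delta s e <= w v;
  inv_cover_saturated : forall v, v \in st_C s -> edges_of E v \subset st_cov s;
  inv_covered_hit : forall e, e \in st_cov s -> (e \in E) && (e :&: st_C s != set0);
  inv_cover_tight : forall v, v \in st_C s ->
    (1 - beta) * w v <= \sum_(e in edges_of E v) st_delta s e }.

Definition joining (s : state R V) : {set V} :=
  [set v | ~~ vterminated E s v &
           (1 - beta) * w v <= \sum_(e in edges_of E v) st_delta s e].

Definition covered_next (s : state R V) : {set {set V}} :=
  st_cov s :|: [set e in E | [exists v in e, v \in joining s]].

Definition stuck (s : state R V) (v : V) : bool :=
  beta / alpha * w v < \sum_(e in edges_of E v :\: covered_next s) st_deal s e.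

(* [simpl] expands [step] completely; these equations unfold it one component
   at a time, in terms of the sets defined above. *)
Lemma st_C_step s : st_C (step s) = st_C s :|: joining s.
Proof. by []. Qed.

Lemma st_cov_step s : st_cov (step s) = covered_next s.
Proof. by []. Qed.

Lemma st_deal_step s e :
  st_deal (step s) e = if e \in covered_next s then st_deal s e
                       else if [exists v in e, stuck s v] then st_deal s e
                       else alpha * st_deal s e.
Proof. by []. Qed.

Lemma st_delta_step s e :
  st_delta (step s) e = if e \in covered_next s then st_delta s e
                        else st_delta s e + st_deal (step s) e.
Proof. by []. Qed.

Lemma sub_covered_next s : st_cov s \subset covered_next s.
Proof. exact: subsetUl. Qed.

Lemma joining_saturated s v : v \in joining s -> edges_of E v \subset covered_next s.
Proof.
move=> vJ; apply/subsetP => e; rewrite inE => /andP[eE ve].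
by rewrite !inE eE; apply/orP; right; apply/existsP; exists v; rewrite ve.
Qed.

Lemma sum_delta_step s v :
  \sum_(e in edges_of E v) st_delta (step s) e =
  \sum_(e in edges_of E v) st_delta s e +
  \sum_(e in edges_of E v :\: covered_next s) st_deal (step s) e.
Proof.
rewrite (big_setID (covered_next s)).
rewrite [\sum_(e in _) st_delta s e](big_setID (covered_next s)).
rewrite -addrA -big_split.
congr (_ + _); apply: eq_bigr => e.
  by case/setIP=> _ ecov; rewrite st_delta_step ecov.
by case/setDP=> _ /negbTE ecov; rewrite st_delta_step ecov.
Qed.

Lemma sum_delta_step_saturated s v : edges_of E v \subset covered_next s ->
  \sum_(e in edges_of E v) st_delta (step s) e = \sum_(e in edges_of E v) st_delta s e.
Proof.
by rewrite -setD_eq0 sum_delta_step => /eqP->; rewrite big_set0 addr0.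
Qed.

Hypotheses (hw : forall v, 0 <= w v) (hbeta : 0 <= beta <= 1) (halpha : 1 < alpha).

Lemma mwhvc_invariant_init : mwhvc_invariant (init_state E w eps f).
Proof.
case/andP: hbeta => b0 b1.
have share0 v : 0 <= w v / (#|edges_of E v|)%:R by rewrite divr_ge0.
have deal0_ge0 e : 0 <= deal0 E w eps f e by rewrite mulr_ge0 ?setmin_ge0.
have deal0_packing v : \sum_(e in edges_of E v) deal0 E w eps f e <= beta * w v.
  apply: le_trans (_ : \sum_(e in edges_of E v) beta * (w v / (#|edges_of E v|)%:R) <= _).
    apply: ler_sum => e; rewrite inE => /andP[_ ve].
    by rewrite ler_wpM2l // (setmin_le _ ve).
  rewrite sumr_const; have [->|deg_gt0] := posnP #|edges_of E v|.
    by rewrite mulr0n mulr_ge0.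
  by rewrite -mulrnAr ler_wpM2l // -[_ *+ _]mulr_natr mulfVK // pnatr_eq0 -lt0n.
split=> //= [v|v|v|e|v]; rewrite ?inE //; first by rewrite setD0.
by apply: le_trans (deal0_packing v) _; rewrite ler_piMl.
Qed.

Section Step.
Variables (s : state R V) (Is : mwhvc_invariant s).

Lemma step_deal_ge0 e : 0 <= st_deal (step s) e.
Proof.
have deal_ge0 := inv_deal_ge0 Is e.
rewrite st_deal_step; case: ifP => // _; case: ifP => // _.
by rewrite mulr_ge0 // ltW // (lt_trans ltr01).
Qed.

Lemma step_deal_packing v :
  \sum_(e in edges_of E v :\: covered_next s) st_deal (step s) e <= beta * w v.
Proof.
have alpha_gt0 : 0 < alpha := lt_trans ltr01 halpha.
have [vstuck|vraise] := boolP (stuck s v).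
  have fresh : edges_of E v :\: covered_next s \subset edges_of E v :\: st_cov s.
    by apply: setDS; apply: sub_covered_next.
  apply: le_trans (inv_deal_packing Is v).
  apply: le_trans (ler_sum_subset fresh (fun e _ => inv_deal_ge0 Is e)).
  apply: ler_sum => e /setDP[ve /negbTE ecov]; rewrite st_deal_step ecov.
  by case: ifP => // /existsP[]; exists v; move: ve; rewrite inE => /andP[_ ->].
apply: le_trans (_ : \sum_(e in edges_of E v :\: covered_next s) alpha * st_deal s e <= _).
  apply: ler_sum => e _.
  have raise_ge : st_deal s e <= alpha * st_deal s e.
    by rewrite ler_peMl ?inv_deal_ge0 ?ltW.
  by rewrite st_deal_step; case: ifP => _ //; case: ifP.
move: vraise; rewrite /stuck -leNgt -mulr_sumr => vraise.
apply: le_trans (_ : alpha * (beta / alpha * w v) <= _); first by rewrite ler_pM2l.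
by rewrite mulrCA mulrA mulfVK ?gt_eqF.
Qed.

Lemma step_delta_packing v :
  \sum_(e in edges_of E v) st_delta (step s) e <= w v.
Proof.
have [sat|unsat] := boolP (edges_of E v \subset covered_next s).
  by rewrite sum_delta_step_saturated // inv_delta_packing.
have vnotJ : v \notin joining s by apply: contraNN unsat; apply: joining_saturated.
have vactive : ~~ vterminated E s v.
  rewrite /vterminated negb_or; apply/andP; split; apply: contraNN unsat.
    by move=> /(inv_cover_saturated Is) sat; apply: subset_trans sat (sub_covered_next s).
  by move=> sat; apply: subset_trans sat (sub_covered_next s).
move: vnotJ; rewrite inE vactive /= -ltNge sum_delta_step => slack.
have := step_deal_packing v; lra.
Qed.

Lemma step_cover_saturated v :
  v \in st_C (step s) -> edges_of E v \subset st_cov (step s).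
Proof.
rewrite st_C_step st_cov_step inE => /orP[/(inv_cover_saturated Is) sat|].
  exact: subset_trans sat (sub_covered_next s).
exact: joining_saturated.
Qed.

Lemma step_covered_hit e :
  e \in st_cov (step s) -> (e \in E) && (e :&: st_C (step s) != set0).
Proof.
rewrite st_cov_step st_C_step inE => /orP[/(inv_covered_hit Is)|].
  case/andP=> -> /set0Pn[u /setIP[ue uC]].
  by apply/set0Pn; exists u; rewrite inE ue inE uC.
rewrite inE => /andP[-> /existsP[u /andP[ue uJ]]].
by apply/set0Pn; exists u; rewrite inE ue inE uJ orbT.
Qed.

Lemma step_cover_tight v : v \in st_C (step s) ->
  (1 - beta) * w v <= \sum_(e in edges_of E v) st_delta (step s) e.
Proof.
move=> vC; rewrite sum_delta_step_saturated -?st_cov_step ?step_cover_saturated //.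
move: vC; rewrite st_C_step inE => /orP[/(inv_cover_tight Is)//|].
by rewrite inE => /andP[].
Qed.

Lemma mwhvc_invariant_step : mwhvc_invariant (step s).
Proof.
split; rewrite ?st_cov_step.
- exact: step_deal_ge0.
- move=> e; rewrite st_delta_step; case: ifP => _; first exact: inv_delta_ge0.
  by rewrite addr_ge0 ?inv_delta_ge0 ?step_deal_ge0.
- exact: step_deal_packing.
- exact: step_delta_packing.
- by move=> v; rewrite -st_cov_step; apply: step_cover_saturated.
- by move=> e; rewrite -st_cov_step; apply: step_covered_hit.
- exact: step_cover_tight.
Qed.

End Step.

Lemma mwhvc_invariant_run T : mwhvc_invariant (run E w eps alpha f T).
Proof.
elim: T => [|T IH]; first exact: mwhvc_invariant_init.
exact: mwhvc_invariant_step.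
Qed.

End Invariant.

Lemma mwhvc_beta_ge0_le1 (R : realFieldType) (eps : R) (f : nat) :
  0 < eps -> 0 <= mwhvc_beta eps f <= 1.
Proof.
move=> eps_gt0; have fe : 0 < f%:R + eps by rewrite ltr_wpDl.
by rewrite /mwhvc_beta divr_ge0 ?(ltW eps_gt0) ?(ltW fe) //= ler_pdivrMr // mul1r lerDr.
Qed.

Lemma mwhvc_beta_complement (R : realFieldType) (eps : R) (f : nat) :
  f%:R + eps != 0 -> (1 - mwhvc_beta eps f) * (f%:R + eps) = f%:R.
Proof. by move=> fe; rewrite /mwhvc_beta mulrBl mul1r mulfVK // addrK. Qed.

Lemma rank_gt0 (V : finType) (E : {set {set V}}) (f : nat) :
  (forall e, e \in E -> 0 < #|e| <= f)%N -> (0 < \max_v #|edges_of E v|)%N -> (0 < f)%N.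
Proof.
move=> hrank; have [E0|[e /hrank/andP[e_gt0 ef]]] := set_0Vmem E; last first.
  by move=> _; apply: leq_trans e_gt0 ef.
rewrite big1 // => v _; apply/eqP; rewrite cards_eq0; apply/eqP/setP => e.
by rewrite !inE E0 inE.
Qed.

Lemma mwhvc_invariant_cover (R : realFieldType) (V : finType) (E : {set {set V}})
    (w : V -> R) (eps : R) (f : nat) (s : state R V) :
  mwhvc_invariant E w eps f s -> terminated E s -> is_vertex_cover E (st_C s).
Proof.
move=> Is /andP[_ /forall_inP allcov] e /allcov.
by case/(inv_covered_hit Is)/andP.
Qed.

Lemma mwhvc_invariant_cost (R : realFieldType) (V : finType) (E : {set {set V}})
    (w : V -> R) (eps : R) (f : nat) (s : state R V) (x : V -> R) :
  (forall e, e \in E -> #|e| <= f)%N -> (0 < f)%N -> 0 < eps ->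
  mwhvc_invariant E w eps f s -> frac_cover E x ->
  \sum_(v in st_C s) w v <= (f%:R + eps) * \sum_v w v * x v.
Proof.
move=> hrank f_gt0 eps_gt0 Is xcover.
have fe : 0 < f%:R + eps by rewrite ltr_wpDl.
have := tight_set_cost hrank (fun e _ => inv_delta_ge0 Is e) (inv_delta_packing Is)
  (inv_cover_tight Is) xcover.
rewrite -(ler_pM2r fe) mulrAC mwhvc_beta_complement ?gt_eqF // mulrAC -mulrA.
by rewrite ler_pM2l ?ltr0n // mulrC.
Qed.

Theorem mainTheorem3 (R : realFieldType) (V : finType) (E : {set {set V}})
    (f : nat) (w : V -> R) (eps alpha : R)
    (hrank : forall e, e \in E -> (0 < #|e| <= f)%N)
    (hDelta : (3 <= \max_(v : V) #|edges_of E v|)%N)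
    (hw : forall v, 0 <= w v)
    (heps : 0 < eps <= 1)
    (halpha : 1 < alpha)
    (T : nat)
    (hT : terminated E (run E w eps alpha f T)) :
  is_vertex_cover E (st_C (run E w eps alpha f T)) /\
  (forall x : V -> R, frac_cover E x ->
     \sum_(v in st_C (run E w eps alpha f T)) w v
       <= (f%:R + eps) * \sum_(v : V) w v * x v).
Proof.
case/andP: heps => eps_gt0 _.
have f_gt0 : (0 < f)%N by apply: rank_gt0 hrank (leq_trans _ hDelta).
have Irun := mwhvc_invariant_run E hw (mwhvc_beta_ge0_le1 f eps_gt0) halpha T.
split; first exact: mwhvc_invariant_cover Irun hT.
move=> x; apply: mwhvc_invariant_cost f_gt0 eps_gt0 Irun.
by move=> e /hrank/andP[].
Qed.
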